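(* Let $n\ge 1$ and $G\in\mathcal{G}_{2n}$ with $F(G)=n-1$. Then $f(G)\geq \lfloor n/2\rfloor$.
   Context: All graphs are finite and simple. $\mathcal{G}_{2n}$ denotes the set of all graphs with $2n$ vertices that have a perfect matching. For a perfect matching $M$ of $G$, a forcing set of $M$ is a subset $S\subseteq M$ contained in no other perfect matching of $G$; $f(G,M)$ is the minimum size of a forcing set of $M$. $f(G)$ and $F(G)$ are the minimum and maximum of $f(G,M)$ over all perfect matchings $M$ of $G$. *)

From mathcomp Require Import all_boot.
Set Implicit Arguments. Unset Strict Implicit. Unset Printing Implicit Defensive.

Definition simple_graph (T : finType) (e : rel T) : Prop :=
  symmetric e /\ irreflexive e.

Definition is_edge (T : finType) (e : rel T) (E : {set T}) : bool :=
  [exists x, exists y, (e x y) && (E == [set x; y])].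

Definition perfect_matching (T : finType) (e : rel T) (M : {set {set T}}) : bool :=
  [forall E in M, is_edge e E] &&
  [forall v : T, #|[set E in M | v \in E]| == 1].

Definition forcing_set (T : finType) (e : rel T) (M S : {set {set T}}) : bool :=
  (S \subset M) &&
  [forall M' : {set {set T}}, (perfect_matching e M' && (S \subset M')) ==> (M' == M)].

(* f(G,M): minimum size of a forcing set of M (M itself is one, giving the default). *)
Definition fGM (T : finType) (e : rel T) (M : {set {set T}}) : nat :=
  \big[minn/#|M|]_(S : {set {set T}} | forcing_set e M S) #|S|.

(* f(G): minimum of f(G,M) over perfect matchings M (default #|T| is an upper
   bound of every f(G,M), so it is irrelevant when G has a perfect matching). *)
Definition fG (T : finType) (e : rel T) : nat :=
  \big[minn/#|T|]_(M : {set {set T}} | perfect_matching e M) fGM e M.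

Definition FG (T : finType) (e : rel T) : nat :=
  \max_(M : {set {set T}} | perfect_matching e M) fGM e M.

From HB Require Import structures.
From mathcomp Require Import all_boot zify.
Set Implicit Arguments. Unset Strict Implicit. Unset Printing Implicit Defensive.

(* Perfect matchings are handled through their partner functions, i.e.
   fixed-point-free involutions [m] along edges.  A set [S] of matching edges
   forces the matching of [p] iff [p] is the only partner function agreeing
   with [p] on the vertices covered by [S] ([forcingP]); a [p]-alternating
   cycle avoiding these vertices therefore refutes forcing.

   1. If the matching of [m] has forcing number [n - 1], any two of its edges
      span an [m]-alternating square: otherwise deleting them from the
      matching leaves a forcing set with [n - 2] edges
      ([large_forcing_squares]).
   2. If [S] forces some perfect matching [p] and has fewer than [n/2] edges,
      four vertices avoid both the vertices [W] of [S] and their [m]-partners.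
      Two [m]-edges among them form a square avoiding [W] that dominates every
      other vertex, and a case analysis on the [p]-partners of its corners
      ([square_flexible]) yields a [p]-alternating cycle of length 4, 6 or 8
      avoiding [W], a contradiction ([forcing_set_large]). *)

HB.instance Definition _ := SemiGroup.isComLaw.Build nat minn minnA minnC.

Lemma bigmin_geq (I : finType) (P : pred I) (F : I -> nat) x0 k :
  k <= x0 -> (forall i, P i -> k <= F i) -> k <= \big[minn/x0]_(i | P i) F i.
Proof. by move=> kx0 kF; elim/big_ind: _ => // x y; rewrite leq_min => -> ->. Qed.

Lemma fGM_le (T : finType) (e : rel T) (M S : {set {set T}}) :
  forcing_set e M S -> fGM e M <= #|S|.
Proof. by move=> fS; rewrite /fGM (bigD1 S) //= geq_minl. Qed.

Section PartnerFunctions.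
Variables (T : finType) (e : rel T).

(* A perfect matching of a simple graph is the same thing as a fixed-point-free
   involution [p] of the vertices along edges: [p x] is the partner of [x]. *)
Definition partner (p : T -> T) :=
  [/\ involutive p, forall x, p x != x & forall x, e x (p x)].

Definition matching_of (p : T -> T) : {set {set T}} := [set [set x; p x] | x : T].

Variable p : T -> T.
Hypothesis p_partner : partner p.

Lemma matching_ofP v w : w != v -> ([set v; w] \in matching_of p) = (p v == w).
Proof.
case: p_partner => pK pN _ wv; apply/imsetP/eqP => [[u _ Evw] | <-]; last by exists v.
have : v \in [set u; p u] by rewrite -Evw set21.
have : w \in [set u; p u] by rewrite -Evw !inE eqxx orbT.
rewrite !inE => /orP [/eqP wu | /eqP wpu] /orP [/eqP vu | /eqP vpu].
- by move: wv; rewrite wu vu eqxx.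
- by rewrite vpu pK.
- by rewrite vu.
- by move: wv; rewrite wpu vpu eqxx.
Qed.

Lemma matching_of_mem v : [set v; p v] \in matching_of p.
Proof. exact: imset_f. Qed.

Lemma matching_of_pm : perfect_matching e (matching_of p).
Proof.
case: p_partner => pK pN pe; apply/andP; split.
  apply/forall_inP => _ /imsetP [x _ ->].
  by apply/existsP; exists x; apply/existsP; exists (p x); rewrite pe eqxx.
apply/forallP => v; apply/cards1P; exists [set v; p v]; apply/setP => E.
rewrite !inE; apply/andP/eqP => [[/imsetP [x _ ->]] | ->]; last first.
  by rewrite matching_of_mem set21.
by rewrite !inE => /orP [] /eqP ->; rewrite ?pK // setUC.
Qed.

Lemma matching_edge E v : E \in matching_of p -> v \in E -> E = [set v; p v].
Proof.
case: p_partner => pK _ _ /imsetP [u _ ->].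
by rewrite !inE => /orP [] /eqP ->; rewrite // pK setUC.
Qed.

Lemma cover_matching_of (S : {set {set T}}) v :
  S \subset matching_of p -> (v \in cover S) = ([set v; p v] \in S).
Proof.
move=> /subsetP sub; apply/bigcupP/idP => [[E ES vE] | vS].
  by rewrite -(matching_edge (sub _ ES) vE).
by exists [set v; p v]; rewrite ?set21.
Qed.

(* Every edge of a matching has two vertices, and the edges are pairwise disjoint. *)
Lemma card_cover_matching (S : {set {set T}}) :
  S \subset matching_of p -> #|cover S| = 2 * #|S|.
Proof.
case: p_partner => _ pN _ /subsetP sub.
have tI : trivIset S.
  apply/trivIsetP => E F ES FS; apply: contraR => /pred0Pn [v /andP /= [vE vF]].
  by rewrite (matching_edge (sub _ ES) vE) (matching_edge (sub _ FS) vF).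
have := (leq_card_cover S).2; rewrite tI => /eqP ->; rewrite mulnC -sum_nat_const.
apply: eq_bigr => E /sub /imsetP [x _ ->]; by rewrite cards2 eq_sym pN.
Qed.

Lemma card_matching_of : #|T| = 2 * #|matching_of p|.
Proof.
rewrite -cardsT.
suff -> : [set: T] = cover (matching_of p) by rewrite card_cover_matching.
apply/setP => v; by rewrite inE cover_matching_of // matching_of_mem.
Qed.
End PartnerFunctions.

Section Forcing.
Variables (T : finType) (e : rel T).
Hypothesis e_simple : simple_graph e.

Lemma pm_edge_through N E v : perfect_matching e N -> E \in N -> v \in E ->
  exists2 w, (w != v) && e v w & E = [set v; w].
Proof.
case: e_simple => e_sym e_irr /andP [/forall_inP edges _] EN.
have /existsP [x /existsP [y /andP [exy /eqP ->]]] := edges _ EN.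
have yx : y != x by apply: contraTneq exy => ->; rewrite e_irr.
rewrite !inE => /orP [] /eqP ->; first by exists y; rewrite ?yx.
by exists x; rewrite 1?eq_sym ?yx 1?e_sym // setUC.
Qed.

Lemma pm_edge_uniq N E F v : perfect_matching e N ->
  E \in N -> F \in N -> v \in E -> v \in F -> E = F.
Proof.
case/andP => _ /forallP /(_ v) /cards1P [E0 N_v] EN FN vE vF.
have : E \in [set E in N | v \in E] by rewrite inE EN vE.
have : F \in [set E in N | v \in E] by rewrite inE FN vF.
by rewrite N_v !inE => /eqP -> /eqP ->.
Qed.

Lemma pm_partner N : perfect_matching e N -> exists2 p, partner e p & N = matching_of p.
Proof.
move=> pmN.
have ex_partner v : exists w, (w != v) && e v w && ([set v; w] \in N).
  have /andP [_ /forallP /(_ v) /cards1P [E N_v]] := pmN.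
  have : E \in [set E in N | v \in E] by rewrite N_v inE.
  rewrite inE => /andP [EN vE]; have [w /andP [wv evw] defE] := pm_edge_through pmN EN vE.
  by exists w; rewrite wv evw -defE.
pose p v := xchoose (ex_partner v).
have pP v : (p v != v) && e v (p v) && ([set v; p v] \in N) := xchooseP (ex_partner v).
have pK : involutive p.
  move=> x; have /andP [/andP [ppx _] N_px] := pP (p x); have /andP [_ N_x] := pP x.
  have := pm_edge_uniq pmN N_x N_px (set22 _ _) (set21 _ _).
  by move/setP/(_ (p (p x))); rewrite !inE eqxx (negbTE ppx) orbT orbF => /eqP.
exists p; first by split=> // x; have /andP [/andP []] := pP x.
apply/setP => E; apply/idP/imsetP => [EN | [x _ ->]]; last by have /andP [] := pP x.
case/andP: (pmN) => /forall_inP /(_ _ EN) /existsP [x /existsP [y /andP [_ /eqP defE]]] _.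
have /andP [_ N_x] := pP x.
by exists x => //; apply: pm_edge_uniq pmN EN N_x _ (set21 _ _); rewrite defE set21.
Qed.

Lemma forcingP p (S : {set {set T}}) : partner e p -> S \subset matching_of p ->
  reflect (forall q, partner e q -> {in cover S, q =1 p} -> q =1 p)
          (forcing_set e (matching_of p) S).
Proof.
move=> p_partner sub; have [_ pN _] := p_partner.
have onS q : partner e q -> (S \subset matching_of q) = [forall v in cover S, q v == p v].
  move=> q_partner; apply/subsetP/forall_inP => [subq v vS | agree E ES].
    by rewrite -(matching_ofP q_partner (pN v)) subq -?(cover_matching_of p_partner).
  have /imsetP [u _ defE] := subsetP sub _ ES.
  have uS : u \in cover S by rewrite (cover_matching_of p_partner) // -defE.
  by rewrite defE -(eqP (agree u uS)) matching_of_mem.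
apply: (iffP andP) => [[_ /forallP forces] q q_partner agree | rigid].
  have /eqP eqM : matching_of q == matching_of p.
    apply: (implyP (forces _)); rewrite matching_of_pm // onS //.
    by apply/forall_inP => v /agree ->.
  by move=> v; apply/eqP; rewrite -(matching_ofP q_partner (pN v)) eqM matching_of_mem.
split=> //; apply/forallP => M; apply/implyP => /andP [/pm_partner [q q_partner ->]].
rewrite onS // => /forall_inP agree.
have eq_qp := rigid q q_partner (fun v vS => eqP (agree v vS)).
by apply/eqP/eq_imset => v; rewrite eq_qp.
Qed.
End Forcing.

Section EdgeLists.
Variable T : eqType.
Implicit Types (L : seq (T * T)) (d v : T).

Definition verts L : seq T := flatten [seq [:: uv.1; uv.2] | uv <- L].

Fixpoint mate L d v : T :=
  if L is (x, y) :: L' then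
    if v == x then y else if v == y then x else mate L' d v
  else d.

Lemma mate_notin L d v : v \notin verts L -> mate L d v = d.
Proof.
elim: L => //= [[x y] L IH]; rewrite !inE !negb_or => /and3P [vx vy vL].
by rewrite (negbTE vx) (negbTE vy) IH.
Qed.

Lemma mate_in (e : rel T) L d d' v : symmetric e -> all (fun uv => e uv.1 uv.2) L ->
  uniq (verts L) -> v \in verts L ->
  [/\ mate L d v \in verts L, mate L d' (mate L d v) = v,
      mate L d v != v & e v (mate L d v)].
Proof.
move=> e_sym; elim: L => // [[x y] L IH] /andP [/= exy edgesL].
rewrite /= !inE !negb_or => /andP [/andP [xy xL] /andP [yL uL]].
have yx : (y == x) = false by apply/negbTE; rewrite eq_sym.
case: (eqVneq v x) => [-> _ | vx]; first by rewrite yx eqxx.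
case: (eqVneq v y) => [-> _ | vy /= vL]; first by rewrite /= ?yx eqxx xy e_sym.
have [mL mK mN me] := IH edgesL uL vL.
have mx : mate L d v != x by apply: contraNneq xL => <-.
have my : mate L d v != y by apply: contraNneq yL => <-.
by rewrite /= ?(negbTE vx) ?(negbTE vy) (negbTE mx) (negbTE my) mL !orbT.
Qed.
End EdgeLists.

Section AlternatingCycles.
Variables (T : finType) (e : rel T) (n : T -> T) (W : {set T}).
Hypotheses (e_sym : symmetric e) (n_partner : partner e n).
Hypothesis nW : forall v, (n v \in W) = (v \in W).

Let nK : involutive n. Proof. by case: n_partner. Qed.

Let nN x : n x != x. Proof. by case: n_partner. Qed.

Let n_inj : injective n. Proof. exact: can_inj nK. Qed.

(* [n] is not determined by its values on [W]: some other perfect matching agrees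
   with [n] on [W].  This is what an [n]-alternating cycle avoiding [W] provides. *)
Definition flexible := exists q, [/\ partner e q, {in W, q =1 n} & exists v, q v != n v].

(* Exchange along a set [L] of disjoint edges, closed under [n] and avoiding [W],
   that is not already part of the matching [n]. *)
Lemma alternating_swap x y L : let L' := (x, y) :: L in
  all (fun uv => e uv.1 uv.2) L' -> uniq (verts L') ->
  {in verts L', forall v, n v \in verts L'} -> {in verts L', forall v, v \notin W} ->
  n x != y -> flexible.
Proof.
move=> L' edgesL uL closedL offW nxy.
have mateP v := @mate_in _ e L' (n v) (n (mate L' (n v) v)) v e_sym edgesL uL.
exists (fun v => mate L' (n v) v); split.
- have off v : v \notin verts L' -> mate L' (n v) v = n v by apply: mate_notin.
  split=> v; have [vL | vL] := boolP (v \in verts L'); try by have [] := mateP v vL.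
  + by rewrite !off ?nK //; apply: contra vL => /closedL; rewrite nK.
  + by rewrite off.
  + by rewrite off; case: n_partner.
- by move=> v vW; rewrite mate_notin //; apply: contraTN vW => /offW.
- by exists x; rewrite /= eqxx eq_sym.
Qed.

(* Alternating cycles of length 4, 6 and 8 through vertices avoiding [W]:
   the cycle is [x, n x, z, n z, x] (resp. through [y], [z], [w] in turn). *)
Lemma alt_cycle4 x z : uniq [:: n x; z; n z; x] ->
  e (n x) z -> e (n z) x -> x \notin W -> z \notin W -> flexible.
Proof.
move=> u e1 e2 xW zW.
apply: (@alternating_swap (n x) z [:: (n z, x)]) => //=; rewrite ?e1 ?e2 //.
- by apply/allP; rewrite /= !nK !inE !eqxx !orbT.
- by apply/allP; rewrite /= !nW xW zW.
- by case/and3P: u => _ zL _; rewrite nK; apply: contraNneq zL => <-; rewrite !inE eqxx !orbT.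
Qed.

Lemma alt_cycle6 x y z : uniq [:: n x; y; n y; z; n z; x] ->
  e (n x) y -> e (n y) z -> e (n z) x -> x \notin W -> y \notin W -> z \notin W ->
  flexible.
Proof.
move=> u e1 e2 e3 xW yW zW.
apply: (@alternating_swap (n x) y [:: (n y, z); (n z, x)]) => //=; rewrite ?e1 ?e2 ?e3 //.
- by apply/allP; rewrite /= !nK !inE !eqxx !orbT.
- by apply/allP; rewrite /= !nW xW yW zW.
- by case/and3P: u => _ yL _; rewrite nK; apply: contraNneq yL => <-; rewrite !inE eqxx !orbT.
Qed.

Lemma alt_cycle8 x y z w : uniq [:: n x; y; n y; z; n z; w; n w; x] ->
  e (n x) y -> e (n y) z -> e (n z) w -> e (n w) x ->
  x \notin W -> y \notin W -> z \notin W -> w \notin W -> flexible.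
Proof.
move=> u e1 e2 e3 e4 xW yW zW wW.
apply: (@alternating_swap (n x) y [:: (n y, z); (n z, w); (n w, x)]) => //=.
- by rewrite e1 e2 e3 e4.
- by apply/allP; rewrite /= !nK !inE !eqxx !orbT.
- by apply/allP; rewrite /= !nW xW yW zW wW.
- by case/and3P: u => _ yL _; rewrite nK; apply: contraNneq yL => <-; rewrite !inE eqxx !orbT.
Qed.

Ltac distinct := first
  [ done | by rewrite eq_sym | by rewrite -(inj_eq n_inj) ?nK
  | by rewrite eq_sym -(inj_eq n_inj) ?nK ].
Ltac all_distinct := rewrite /= !inE !negb_or; repeat (apply/andP; split); distinct.

Definition dominating_square a b c d :=
  [/\ uniq [:: a; b; c; d],
      [&& a \notin W, b \notin W, c \notin W & d \notin W],
      [&& e a b, e c d, e a c & e b d] &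
      forall v, v \notin [:: a; b; c; d] -> (e v a || e v b) && (e v c || e v d)].

Lemma square_swap a b c d : dominating_square a b c d -> dominating_square b a d c.
Proof.
case=> u /and4P [aW bW cW dW] /and4P [eab ecd eac ebd] dom.
move: u; rewrite /= !inE !negb_or => /and4P [/and3P [ab ac ad] /andP [bc bd] cd _].
split; first by all_distinct.
- by rewrite aW bW cW dW.
- by rewrite e_sym eab e_sym ecd ebd eac.
- move=> v vQ; rewrite orbC (orbC (e v d)); apply: dom.
  by apply: contra vQ; rewrite !inE => /or4P [] ->; rewrite ?orbT.
Qed.

Lemma square_flip a b c d : dominating_square a b c d -> dominating_square c d a b.
Proof.
case=> u /and4P [aW bW cW dW] /and4P [eab ecd eac ebd] dom.
move: u; rewrite /= !inE !negb_or => /and4P [/and3P [ab ac ad] /andP [bc bd] cd _].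
split; first by all_distinct.
- by rewrite aW bW cW dW.
- by rewrite ecd eab e_sym eac e_sym ebd.
- move=> v vQ; rewrite andbC; apply: dom.
  by apply: contra vQ; rewrite !inE => /or4P [] ->; rewrite ?orbT.
Qed.

Ltac close_cycle := rewrite ?nK ?nW; first [ done | by rewrite e_sym | all_distinct ].

Lemma square_inner a b c d : dominating_square a b c d -> n a \in [:: b; c; d] -> flexible.
Proof.
case=> u /and4P [aW bW cW dW] /and4P [eab ecd eac ebd] dom.
move: u; rewrite /= !inE !negb_or => /and4P [/and3P [ab ac ad] /andP [bc bd] cd _].
case/or3P => /eqP na; subst.
- have [nc | ncd] := eqVneq (n c) d; first by subst; apply: (alt_cycle4 (x:=a) (z:=n c));
    close_cycle.
  have /andP [hc _] := dom (n c) ltac:(all_distinct).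
  have /andP [hd _] := dom (n d) ltac:(all_distinct).
  case/orP: hd => hd; first by apply: (alt_cycle4 (x:=a) (z:=d)); close_cycle.
  case/orP: hc => hc; last by apply: (alt_cycle4 (x:=n a) (z:=c)); close_cycle.
  by apply: (alt_cycle6 (x:=a) (y:=n d) (z:=c)); close_cycle.
- have [nb | nbd] := eqVneq (n b) d; first by subst; apply: (alt_cycle4 (x:=a) (z:=n b));
    close_cycle.
  have /andP [_ hb] := dom (n b) ltac:(all_distinct).
  have /andP [hd _] := dom (n d) ltac:(all_distinct).
  case/orP: hb => hb; first by apply: (alt_cycle4 (x:=n a) (z:=b)); close_cycle.
  case/orP: hd => hd; first by apply: (alt_cycle4 (x:=a) (z:=d)); close_cycle.
  by apply: (alt_cycle4 (x:=b) (z:=d)); close_cycle.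
- have [nb | nbc] := eqVneq (n b) c; first by subst; apply: (alt_cycle4 (x:=a) (z:=n b));
    close_cycle.
  have /andP [_ hb] := dom (n b) ltac:(all_distinct).
  have /andP [hc _] := dom (n c) ltac:(all_distinct).
  case/orP: hb => hb; last by apply: (alt_cycle4 (x:=n a) (z:=b)); close_cycle.
  case/orP: hc => hc; first by apply: (alt_cycle4 (x:=a) (z:=c)); close_cycle.
  by apply: (alt_cycle4 (x:=b) (z:=c)); close_cycle.
Qed.

(* If all four vertices of a dominating square are matched outside it, there is
   an alternating cycle of length 4 or 8: orient [x -> z] when [n x] is adjacent
   to [z]; every vertex of the square has an out-arc to the other side, so either
   some arc is two-way or the arcs form a directed 4-cycle. *)
Lemma square_outer a b c d : dominating_square a b c d ->
  n a \notin [:: b; c; d] -> n b \notin [:: a; d; c] ->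
  n c \notin [:: d; a; b] -> n d \notin [:: c; b; a] -> flexible.
Proof.
case=> u /and4P [aW bW cW dW] /and4P [eab ecd eac ebd] dom.
move: u; rewrite /= !inE !negb_or => /and4P [/and3P [ab ac ad] /andP [bc bd] cd _].
case/and3P=> nab nac nad /and3P [nba nbd nbc] /and3P [ncd nca ncb] /and3P [ndc ndb nda].
have /andP [_ ha] := dom (n a) ltac:(all_distinct).
have /andP [_ hb] := dom (n b) ltac:(all_distinct).
have /andP [hc _] := dom (n c) ltac:(all_distinct).
have /andP [hd _] := dom (n d) ltac:(all_distinct).
have [/andP [? ?] | two_ac] := boolP (e (n a) c && e (n c) a).
  by apply: (alt_cycle4 (x:=a) (z:=c)); close_cycle.
have [/andP [? ?] | two_ad] := boolP (e (n a) d && e (n d) a).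
  by apply: (alt_cycle4 (x:=a) (z:=d)); close_cycle.
have [/andP [? ?] | two_bc] := boolP (e (n b) c && e (n c) b).
  by apply: (alt_cycle4 (x:=b) (z:=c)); close_cycle.
have [/andP [? ?] | two_bd] := boolP (e (n b) d && e (n d) b).
  by apply: (alt_cycle4 (x:=b) (z:=d)); close_cycle.
case/orP: ha => ha.
- have hc' : e (n c) b by move: two_ac hc; rewrite ha /= => /negbTE ->.
  have hb' : e (n b) d by move: two_bc hb; rewrite hc' andbT => /negbTE ->.
  have hd' : e (n d) a by move: two_bd hd; rewrite hb' /= => /negbTE ->; rewrite orbF.
  by apply: (alt_cycle8 (x:=a) (y:=c) (z:=b) (w:=d)); close_cycle.
- have hd' : e (n d) b by move: two_ad hd; rewrite ha /= => /negbTE ->.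
  have hb' : e (n b) c by move: two_bd hb; rewrite hd' andbT => /negbTE ->; rewrite orbF.
  have hc' : e (n c) a by move: two_bc hc; rewrite hb' /= => /negbTE ->; rewrite orbF.
  by apply: (alt_cycle8 (x:=a) (y:=d) (z:=b) (w:=c)); close_cycle.
Qed.

Lemma square_flexible a b c d : dominating_square a b c d -> flexible.
Proof.
move=> sq; have sq' := square_swap (square_flip sq).
have [na | na] := boolP (n a \in [:: b; c; d]); first exact: square_inner sq na.
have [nb | nb] := boolP (n b \in [:: a; d; c]); first exact: square_inner (square_swap sq) nb.
have [nc | nc] := boolP (n c \in [:: d; a; b]); first exact: square_inner (square_flip sq) nc.
have [nd | nd] := boolP (n d \in [:: c; b; a]); first exact: square_inner sq' nd.
exact: square_outer sq na nb nc nd.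
Qed.
End AlternatingCycles.

Section TwoEdges.
Variables (T : finType) (e : rel T).

Lemma two_edges_rigid (m q : T -> T) x y : partner e m -> partner e q ->
  y != x -> y != m x ->
  ~~ (e x y && e (m x) (m y)) -> ~~ (e x (m y) && e (m x) y) ->
  (forall v, v \notin [:: x; m x; y; m y] -> q v = m v) -> q =1 m.
Proof.
move=> [mK mN _] [qK qN qe] yx ymx no_sq1 no_sq2 agree.
have qQ v : v \in [:: x; m x; y; m y] -> q v \in [:: x; m x; y; m y].
  move=> vQ; apply: contraT => qvQ; have := agree _ qvQ; rewrite qK => vm.
  have mv : m v = q v by rewrite {1}vm mK.
  suff : m v \in [:: x; m x; y; m y] by rewrite mv (negbTE qvQ).
  by move: vQ; rewrite !inE => /or4P [] /eqP ->; rewrite ?mK eqxx ?orbT.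
have q_inj : injective q := can_inj qK.
have /or4P [] := qQ x ltac:(by rewrite inE eqxx); rewrite ?inE ?orbF => /eqP qx.
- by move: (qN x); rewrite qx eqxx.
- have qy : q y = m y.
    have /or4P [] := qQ y ltac:(by rewrite !inE eqxx !orbT); rewrite ?inE ?orbF => /eqP qy //.
    + by move: ymx; rewrite -qx -qy qK eqxx.
    + by move: yx; rewrite -qx in qy; rewrite (q_inj _ _ qy) eqxx.
    + by move: (qN y); rewrite qy eqxx.
  move=> v; have [vQ | /agree //] := boolP (v \in [:: x; m x; y; m y]).
  by move: vQ; rewrite !inE => /or4P [] /eqP ->; rewrite ?mK -?qx -?qy ?qK.
- have qmx : q (m x) = m y.
    have /or4P [] := qQ (m x) ltac:(by rewrite !inE eqxx !orbT); rewrite ?inE ?orbF => /eqP h //.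
    + by move: ymx; rewrite -(qK (m x)) h qx eqxx.
    + by move: (qN (m x)); rewrite h eqxx.
    + by move: (mN x); rewrite -qx in h; rewrite (q_inj _ _ h) eqxx.
  by move: no_sq1; rewrite -qmx -qx !qe.
- have qmx : q (m x) = y.
    have /or4P [] := qQ (m x) ltac:(by rewrite !inE eqxx !orbT); rewrite ?inE ?orbF => /eqP h //.
    + have : m x = m y by rewrite -(qK (m x)) h qx.
      by move/(can_inj mK)/eqP; rewrite eq_sym (negbTE yx).
    + by move: (qN (m x)); rewrite h eqxx.
    + by move: (mN x); rewrite -qx in h; rewrite (q_inj _ _ h) eqxx.
  by move: no_sq2; rewrite -qx -qmx !qe.
Qed.
End TwoEdges.

Section LargeForcingNumber.
Variables (T : finType) (e : rel T).
Hypothesis e_simple : simple_graph e.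

Definition alternating_squares (m : T -> T) :=
  forall x y, y != x -> y != m x -> (e x y && e (m x) (m y)) || (e x (m y) && e (m x) y).

(* A perfect matching of a graph on [2n] vertices with forcing number at least
   [n - 1] has alternating squares: otherwise deleting two edges not spanning
   one leaves a forcing set of size [n - 2]. *)
Lemma large_forcing_squares n m : partner e m -> #|T| = 2 * n ->
  n - 1 <= fGM e (matching_of m) -> alternating_squares m.
Proof.
move=> m_partner cardT large x y yx ymx; apply: contraT; rewrite negb_or => /andP [no1 no2].
set E1 := [set x; m x]; set E2 := [set y; m y].
set S := matching_of m :\ E1 :\ E2.
have E2E1 : E2 \in matching_of m :\ E1.
  rewrite !inE matching_of_mem andbT; apply: contraNneq yx => /setP /(_ y).
  by rewrite /E1 /E2 !inE eqxx (negbTE ymx) orbF => <-.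
have cardS : #|matching_of m| = #|S| + 2.
  by rewrite (cardsD1 E1) matching_of_mem (cardsD1 E2 (_ :\ E1)) E2E1 addnA addn2.
have subS : S \subset matching_of m by apply: subset_trans (subsetDl _ _) (subsetDl _ _).
have forces : forcing_set e (matching_of m) S.
  apply/forcingP => // q q_partner agree; apply: (two_edges_rigid m_partner q_partner yx ymx no1 no2).
  move=> v vQ; apply: agree; rewrite (cover_matching_of m_partner) // !inE matching_of_mem andbT.
  by apply/andP; split; apply: contraNneq vQ => /setP /(_ v); rewrite !inE eqxx /= =>
    /esym /orP [] /eqP ->; rewrite eqxx ?orbT.
have := fGM_le forces; have := card_matching_of m_partner; lia.
Qed.

Lemma squares_dominate m a c v : partner e m -> alternating_squares m ->
  v \notin [:: a; m a; c; m c] -> (e v a || e v (m a)) && (e v c || e v (m c)).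
Proof.
case: e_simple => e_sym _ _ sq; rewrite !inE !negb_or => /and4P [va vma vc vmc].
have side x : v != x -> v != m x -> e v x || e v (m x).
  move=> vx vmx; rewrite !(e_sym v).
  by case/orP: (sq x v vx vmx) => /andP [? ?]; apply/orP; [left | right].
by rewrite !side.
Qed.

Lemma square_of_edges m (W : {set T}) a c : partner e m -> alternating_squares m ->
  c != m a -> c != a -> a \notin W -> m a \notin W -> c \notin W -> m c \notin W ->
  exists d, dominating_square e W a (m a) d (m d).
Proof.
move=> m_partner sq cma ca aW maW cW mcW; have [mK mN me] := m_partner.
have m_inj : injective m := can_inj mK.
have [d [dW mdW da dma /andP [ead emad]]] : exists d,
    [/\ d \notin W, m d \notin W, d != a, d != m a & e a d && e (m a) (m d)].
  case/orP: (sq a c ca cma) => /andP [e1 e2]; [exists c | exists (m c)];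
    rewrite ?mK e1 e2; split => //.
  - by apply: contraNneq cma => <-; rewrite mK.
  - by rewrite (inj_eq m_inj).
exists d; split; rewrite ?aW ?maW ?dW ?mdW ?me ?ead ?emad //.
- have mda : m d != a by apply: contraNneq dma => <-; rewrite mK.
  rewrite /= !inE !negb_or (eq_sym a (m a)) (eq_sym d (m d)) !mN (inj_eq m_inj).
  by rewrite (eq_sym a d) da (eq_sym a (m d)) mda (eq_sym (m a) d) dma.
- by move=> v; apply: squares_dominate.
Qed.

(* Otherwise at least four vertices lie neither on [S] nor are [m]-matched to
   a vertex on [S]; two [m]-edges among them span a dominating square avoiding
   the vertices of [S], whose alternating cycle contradicts forcing. *)
Lemma forcing_set_large n m N S : partner e m -> #|T| = 2 * n -> alternating_squares m ->
  perfect_matching e N -> forcing_set e N S -> n./2 <= #|S|.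
Proof.
move=> m_partner cardT sq /(pm_partner e_simple) [p p_partner ->] fS.
have [e_sym _] := e_simple; have [mK mN _] := m_partner; have [pK _ _] := p_partner.
have m_inj : injective m := can_inj mK.
have sub : S \subset matching_of p by case/andP: fS.
have rigid := elimT (forcingP e_simple p_partner sub) fS.
set W := cover S.
have pW v : (p v \in W) = (v \in W) by rewrite !(cover_matching_of p_partner) // pK setUC.
rewrite leqNgt; apply/negP => small.
set U := ~: (W :|: m @: W).
have cardU : 4 <= #|U|.
  have := cardsC (W :|: m @: W); have := (leq_card_setU W (m @: W)).1.
  rewrite card_imset // (card_cover_matching p_partner sub) cardT /U.
  have := odd_double_half n; rewrite -muln2; lia.
have mU v : v \in U -> m v \in U.
  rewrite !inE !negb_or mem_imset // => /andP [vW vmW]; rewrite vW andbT.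
  by apply: contra vmW => mvW; rewrite -[v]mK imset_f.
have /card_gt0P [a aU] : 0 < #|U| by lia.
have /card_gt0P [c] : 0 < #|U :\ a :\ m a|.
  by move: cardU; rewrite (cardsD1 a) aU (cardsD1 (m a)) in_setD1 mU // mN; lia.
rewrite !in_setD1 => /and3P [cma ca cU].
have offW v : v \in U -> v \notin W by rewrite !inE negb_or => /andP [].
have [d sq_ad] := square_of_edges m_partner sq cma ca (W := W) (offW _ aU) (offW _ (mU _ aU))
  (offW _ cU) (offW _ (mU _ cU)).
have [q [q_partner agree [v qv]]] := square_flexible e_sym p_partner pW sq_ad.
by move: qv; rewrite (rigid q q_partner agree) eqxx.
Qed.
End LargeForcingNumber.

Theorem corollary5p2 (n : nat) (T : finType) (e : rel T) :
  1 <= n ->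
  simple_graph e ->
  #|T| = 2 * n ->
  (exists M : {set {set T}}, perfect_matching e M) ->
  FG e = n - 1 ->
  n./2 <= fG e.
Proof.
move=> _ e_simple cardT [M0 pmM0] FG_n.
have half_le : n./2 <= n by rewrite -{2}(odd_double_half n) -addnn addnA leq_addl.
set M := [arg max_(M > M0 | perfect_matching e M) fGM e M].
have pmM : perfect_matching e M by rewrite /M; case: arg_maxnP.
have fM : fGM e M = n - 1 by rewrite -FG_n /FG (bigmax_eq_arg M0).
have [m m_partner defM] := pm_partner e_simple pmM.
have sq : alternating_squares e m.
  by apply: (large_forcing_squares e_simple m_partner cardT); rewrite -defM fM.
apply: bigmin_geq => [|N pmN]; first by rewrite cardT; lia.
apply: bigmin_geq => [|S fS]; last exact: (forcing_set_large e_simple m_partner cardT sq pmN fS).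
have [p p_partner ->] := pm_partner e_simple pmN.
by move: cardT; rewrite (card_matching_of p_partner); lia.
Qed.
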